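(* Let $\mathcal{G}_1$ be an arbitrary two-terminal series-parallel graph with source $s_1$, sink $t_1$ and effective resistance $\rho^{\mathrm{eff}}_{s_1,t_1}$ between them. Let $\mathcal{G}_2$ be a 1-path (a single edge) with source $s_2$, sink $t_2$ and effective resistance $\rho^{\mathrm{eff}}_{s_2,t_2}$. For each $i$, consider the leader-follower system on $\mathcal{G}_i$ with the source $s_i$ grounded and control matrix $B_i=e_{t_i}$. Let $\mathcal{H}_2^i$ denote its $\mathcal{H}_2$ norm. If $\rho^{\mathrm{eff}}_{s_1,t_1}=\rho^{\mathrm{eff}}_{s_2,t_2}$, then $(\mathcal{H}_2^1)^2=(\mathcal{H}_2^2)^2$.
   Context: Graphs are undirected with positive edge weights (conductances). Effective resistance is computed in the corresponding electrical network. Two-terminal series-parallel (TTSP) graphs are defined recursively. A single edge with designated source and sink (a 1-path) is TTSP. If $\mathcal{G}_1,\mathcal{G}_2$ are TTSP with sources $s_1,s_2$ and sinks $t_1,t_2$, then: - their series join (identify $t_1$ with $s_2$; new source $s_1$, new sink $t_2$) is TTSP; - their parallel join (identify $s_1$ with $s_2$ and $t_1$ with $t_2$) is TTSP. Multiple edges are allowed. For a TTSP graph with source $s$ grounded (state fixed at $0$), let $L_D$ be the Dirichlet Laplacian: the weighted Laplacian with the row and column of $s$ deleted. The system is $\dot x=-L_Dx+Bu$, $y=x$. Its squared $\mathcal{H}_2$ norm is $-\tfrac12\mathrm{Tr}\big(B^T(-L_D)^{-1}B\big)=\tfrac12\mathrm{Tr}\big(B^TL_D^{-1}B\big)$. 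*)

From HB Require Import structures.
From mathcomp Require Import all_boot all_order all_algebra.
Set Implicit Arguments. Unset Strict Implicit. Unset Printing Implicit Defensive.
Import Order.TTheory GRing.Theory Num.Theory.
Local Open Scope ring_scope.

(** Two-terminal series-parallel graphs, as syntax trees.  Each leaf is a
    1-path (a single edge) carrying its conductance (edge weight). *)
Inductive ttsp (R : Type) :=
| TEdge of R
| TSer of ttsp R & ttsp R
| TPar of ttsp R & ttsp R.
Arguments TEdge {R}.

Fixpoint ttsp_pos (R : numDomainType) (g : ttsp R) : Prop :=
  match g with
  | TEdge c => 0 < c
  | TSer a b => ttsp_pos a /\ ttsp_pos b
  | TPar a b => ttsp_pos a /\ ttsp_pos b
  end.

(** Realisation of the tree as a concrete multigraph on vertices
    0, ..., nv g - 1, with source = vertex 0 and sink = vertex 1 always. *)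
Fixpoint nv (R : Type) (g : ttsp R) : nat :=
  match g with
  | TEdge _ => 2
  | TSer a b => (nv a + nv b - 1)%N
  | TPar a b => (nv a + nv b - 2)%N
  end.

(* series join: t1 and s2 are identified into the new vertex 2;
   inner vertices of G1 (>= 2) shift by 1, inner vertices of G2 go after. *)
Definition ser1 (v : nat) : nat :=
  if v == 0%N then 0%N else if v == 1%N then 2%N else v.+1.
Definition ser2 (n1 v : nat) : nat :=
  if v == 0%N then 2%N else if v == 1%N then 1%N else (v + n1 - 1)%N.
(* parallel join: s1 = s2 = 0, t1 = t2 = 1; inner vertices of G2 go after
   those of G1. *)
Definition par2 (n1 v : nat) : nat :=
  if (v < 2)%N then v else (v + n1 - 2)%N.

Definition relabel (R : Type) (f : nat -> nat) (E : seq (nat * nat * R)) :=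
  [seq (f e.1.1, f e.1.2, e.2) | e <- E].

Fixpoint edges (R : Type) (g : ttsp R) : seq (nat * nat * R) :=
  match g with
  | TEdge c => [:: (0%N, 1%N, c)]
  | TSer a b => relabel ser1 (edges a) ++ relabel (ser2 (nv a)) (edges b)
  | TPar a b => edges a ++ relabel (par2 (nv a)) (edges b)
  end.

Definition lap_entry (R : nzRingType) (E : seq (nat * nat * R)) (i j : nat) : R :=
  \sum_(e <- E) e.2 * (((e.1.1 == i)%:R - (e.1.2 == i)%:R)
                        * ((e.1.1 == j)%:R - (e.1.2 == j)%:R)).

Definition laplacian (R : nzRingType) (g : ttsp R) : 'M[R]_(nv g) :=
  \matrix_(i, j) lap_entry (edges g) i j.

(** Effective resistance between source (vertex 0) and sink (vertex 1):
    r is the voltage drop v_t - v_s of a potential v when a unit current is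
    injected at t and extracted at s, i.e. L v = e_t - e_s. *)
Definition src_sink (R : nzRingType) (n : nat) : 'cV[R]_n :=
  \col_i (((i : nat) == 1%N)%:R - ((i : nat) == 0%N)%:R).

Definition is_eff_res (R : nzRingType) (g : ttsp R) (r : R) : Prop :=
  exists v : 'cV[R]_(nv g),
    laplacian g *m v = src_sink R (nv g) /\ r = ((src_sink R (nv g))^T *m v) 0 0.

(** Dirichlet Laplacian: row and column of the source (vertex 0) deleted;
    index i of L_D corresponds to vertex i+1, so the sink is index 0. *)
Definition dirichlet_lap (R : nzRingType) (g : ttsp R) : 'M[R]_((nv g).-1) :=
  \matrix_(i, j) lap_entry (edges g) (i : nat).+1 (j : nat).+1.

Definition ctrl_sink (R : nzRingType) (m : nat) : 'cV[R]_m :=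
  \col_i ((i : nat) == 0%N)%:R.

(** squared H2 norm of  x' = -L_D x + B u, y = x :
    -1/2 Tr(B^T (-L_D)^{-1} B) *)
Definition H2sq (R : fieldType) (g : ttsp R) : R :=
  - (1 / 2%:R) * \tr ((ctrl_sink R ((nv g).-1))^T *m invmx (- dirichlet_lap g)
                      *m ctrl_sink R ((nv g).-1)).

From HB Require Import structures.
From mathcomp Require Import all_boot all_order all_algebra.
From mathcomp Require Import zify ring.
Import Order.TTheory GRing.Theory Num.Theory.
Local Open Scope ring_scope.

(* With B = e_t the squared H2 norm is half the diagonal entry of L_D^-1 at
   the sink.  If L v = e_t - e_s, then u = v - v_s 1 vanishes at the grounded
   source and, since L kills constants, solves L_D u = e_t; hence that entry
   is u_t = v_t - v_s, the effective resistance.  So (H2)^2 = r_eff / 2 for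
   every TTSP graph.  L_D is invertible because x^T L x = sum_e c_e (x_u - x_v)^2
   and TTSP graphs are connected: a null vector of L_D, grounded at s, is
   constant along every edge, hence zero. *)

Section OrdinalDelta.
Context {R : pzRingType}.
Implicit Type f : nat -> R.

Lemma sum_ord_delta {n} f {x : nat} :
  (x < n)%N -> \sum_(k < n) (x == k)%:R * f k = f x.
Proof.
move=> x_lt; have := big_ord1_eq +%R f x n; rewrite x_lt big_mkcond => <-.
by apply: eq_bigr => k _; rewrite eq_sym; case: eqP; rewrite ?mul1r ?mul0r.
Qed.

Lemma sum_ord_deltaB {n} f {u v : nat} : (u < n)%N -> (v < n)%N ->
  \sum_(k < n) ((u == k)%:R - (v == k)%:R) * f k = f u - f v.
Proof.
by move=> u_lt v_lt; under eq_bigr do rewrite mulrBl; rewrite sumrB !sum_ord_delta.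
Qed.

End OrdinalDelta.

Lemma sumr_ord_recl_pred {R : nmodType} {n : nat} (F : nat -> R) :
  (0 < n)%N -> \sum_(k < n) F k = F 0%N + \sum_(i < n.-1) F i.+1.
Proof.
by move=> n_gt0; rewrite -(big_mkord xpredT F) (big_ltn n_gt0) big_add1 big_mkord.
Qed.

Definition ext0 {R : nmodType} {n : nat} (x : 'I_n -> R) (k : nat) : R :=
  oapp x 0 (insub k).

Lemma ext0E (R : nmodType) n (x : 'I_n -> R) (i : 'I_n) : ext0 x i = x i.
Proof. by rewrite /ext0 valK. Qed.

Lemma invmxN (R : comUnitRingType) n (A : 'M[R]_n) : invmx (- A) = - invmx A.
Proof.
rewrite -scaleN1r; have [A_unit|A_nunit] := boolP (A \in unitmx).
  by rewrite invmxZ ?unitmxZ ?unitrN1 // invrN1 scaleN1r.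
by rewrite !invmx_out ?inE ?unitmxZ ?unitrN1 ?scaleN1r.
Qed.

Definition edge_ends_lt {T : Type} (n : nat) (E : seq (nat * nat * T)) :=
  all (fun e => (e.1.1 < n) && (e.1.2 < n))%N E.

Section EdgeListLaplacian.
Context {R : comNzRingType}.
Implicit Types (E : seq (nat * nat * R)) (f : nat -> R).

Lemma lap_entryC E i j : lap_entry E i j = lap_entry E j i.
Proof. by apply: eq_bigr => e _; rewrite [X in _ * X]mulrC. Qed.

Context {n : nat} {E : seq (nat * nat * R)}.
Hypothesis E_lt : edge_ends_lt n E.

Lemma sum_lap_entry_mul f a :
  \sum_(k < n) lap_entry E a k * f k =
  \sum_(e <- E) e.2 * (((e.1.1 == a)%:R - (e.1.2 == a)%:R) * (f e.1.1 - f e.1.2)).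
Proof.
under eq_bigr do rewrite mulr_suml; rewrite exchange_big /=.
apply: eq_big_seq => e /(allP E_lt) /andP[u_lt v_lt].
rewrite -(sum_ord_deltaB f u_lt v_lt) !mulr_sumr.
by apply: eq_bigr => k _; ring.
Qed.

Lemma sum_lap_entry_mulB f c a :
  \sum_(k < n) lap_entry E a k * (f k - c) = \sum_(k < n) lap_entry E a k * f k.
Proof.
rewrite (sum_lap_entry_mul (fun k => f k - c)) sum_lap_entry_mul.
by apply: eq_bigr => e _; rewrite opprB addrA subrK.
Qed.

Lemma lap_quad f :
  \sum_(a < n) f a * \sum_(k < n) lap_entry E a k * f k =
  \sum_(e <- E) e.2 * (f e.1.1 - f e.1.2) ^+ 2.
Proof.
under eq_bigr do rewrite sum_lap_entry_mul mulr_sumr; rewrite exchange_big /=.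
apply: eq_big_seq => e /(allP E_lt) /andP[u_lt v_lt].
rewrite expr2 mulrA -[X in _ * X](sum_ord_deltaB f u_lt v_lt) !mulr_sumr.
by apply: eq_bigr => k _; ring.
Qed.

End EdgeListLaplacian.

Lemma lap_quad_eq0 {R : realDomainType} {n : nat} {E : seq (nat * nat * R)}
    {f : nat -> R} :
  edge_ends_lt n E -> all (fun e => 0 < e.2) E ->
  \sum_(a < n) f a * \sum_(k < n) lap_entry E a k * f k = 0 ->
  all (fun e => f e.1.1 == f e.1.2) E.
Proof.
move=> E_lt E_pos /eqP; rewrite lap_quad // big_seq psumr_eq0 => [/allP sum0|e e_in].
  apply/allP => e e_in; have /implyP/(_ e_in) := sum0 e e_in.
  by rewrite mulf_eq0 sqrf_eq0 subr_eq0 gt_eqF //= (allP E_pos).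
have c_gt0 : 0 < e.2 := allP E_pos e e_in.
by apply: mulr_ge0; [exact: ltW | exact: sqr_ge0].
Qed.

Section TTSPCombinatorics.
Context {T : Type}.
Implicit Type g : ttsp T.

Lemma nv_ge2 g : (2 <= nv g)%N.
Proof. by elim: g => [c|a IHa b IHb|a IHa b IHb] /=; lia. Qed.

Lemma ser1_lt (n1 n2 k : nat) : (2 <= n2)%N -> (k < n1)%N -> (ser1 k < n1 + n2 - 1)%N.
Proof.
by move=> n2_ge2 k_lt; rewrite /ser1; case: ifP => /eqP; [|case: ifP => /eqP]; lia.
Qed.

Lemma ser2_lt (n1 n2 k : nat) :
  (2 <= n1)%N -> (2 <= n2)%N -> (k < n2)%N -> (ser2 n1 k < n1 + n2 - 1)%N.
Proof.
by move=> n1_ge2 n2_ge2 k_lt; rewrite /ser2; case: ifP => /eqP; [|case: ifP => /eqP]; lia.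
Qed.

Lemma par2_lt (n1 n2 k : nat) : (2 <= n1)%N -> (k < n2)%N -> (par2 n1 k < n1 + n2 - 2)%N.
Proof. by move=> n1_ge2 k_lt; rewrite /par2; case: ifP; lia. Qed.

Lemma edge_ends_lt_nv g : edge_ends_lt (nv g) (edges g).
Proof.
rewrite /edge_ends_lt; elim: g => [c|a IHa b IHb|a IHa b IHb] //=;
  have a2 := nv_ge2 a; have b2 := nv_ge2 b; rewrite all_cat ?all_map.
- apply/andP; split; [move: IHa | move: IHb]; apply: sub_all => e /andP[u_lt v_lt];
    by rewrite /= ?ser1_lt ?ser2_lt.
- apply/andP; split; [move: IHa | move: IHb]; apply: sub_all => e /andP[u_lt v_lt];
    rewrite /= ?par2_lt //; apply/andP; split; lia.
Qed.

Lemma ser_vertex_cover {n1 n2 k : nat} : (2 <= n1)%N -> (2 <= n2)%N ->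
  (k < n1 + n2 - 1)%N ->
  (exists2 k', k' < n1 & ser1 k' = k)%N \/ (exists2 k', k' < n2 & ser2 n1 k' = k)%N.
Proof.
move=> n1_ge2 n2_ge2 k_lt; rewrite /ser1 /ser2.
have [k_le|k_gt] := leqP k n1.
- case: k k_lt k_le => [|[|k]] _ k_le.
  + by left; exists 0%N => //; lia.
  + by right; exists 1%N => //; lia.
  + by left; exists k.+1; [lia | case: k {k_le}].
- right; exists (k - n1 + 1)%N; first lia.
  by case: ifP => /eqP; [|case: ifP => /eqP]; lia.
Qed.

Lemma par_vertex_cover {n1 n2 k : nat} : (2 <= n1)%N ->
  (k < n1 + n2 - 2)%N -> (k < n1)%N \/ (exists2 k', k' < n2 & par2 n1 k' = k)%N.
Proof.
move=> n1_ge2 k_lt; have [|k_ge] := ltnP k n1; first by left.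
by right; exists (k - n1 + 2)%N; rewrite /par2; case: ltnP; lia.
Qed.

Lemma edges_connected {U : eqType} {w : nat -> U} {g : ttsp T} :
  all (fun e => w e.1.1 == w e.1.2) (edges g) ->
  forall k, (k < nv g)%N -> w k = w 0%N.
Proof.
elim: g w => [c|a IHa b IHb|a IHa b IHb] w /=.
- by rewrite andbT => /eqP w01 [|[|]] // _; rewrite w01.
- rewrite all_cat !all_map => /andP[/(IHa (w \o ser1)) wa /(IHb (w \o ser2 (nv a))) wb].
  move=> k k_lt.
  have w2 : w 2%N = w 0%N by exact: (wa 1%N (nv_ge2 a)).
  have [[k' k'_lt <-]|[k' k'_lt <-]] := ser_vertex_cover (nv_ge2 a) (nv_ge2 b) k_lt.
  + exact: (wa k').
  + by rewrite -w2; exact: (wb k').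
- rewrite all_cat all_map => /andP[/IHa wa /(IHb (w \o par2 (nv a))) wb] k k_lt.
  have [|[k' k'_lt <-]] := par_vertex_cover (nv_ge2 a) k_lt; first exact: wa.
  exact: (wb k').
Qed.

End TTSPCombinatorics.

Lemma edges_pos {R : numDomainType} {g : ttsp R} :
  ttsp_pos g -> all (fun e => 0 < e.2) (edges g).
Proof.
elim: g => [c|a IHa b IHb|a IHa b IHb] /=; first by rewrite andbT.
- by case=> /IHa pa /IHb pb; rewrite all_cat !all_map pa pb.
- by case=> /IHa pa /IHb pb; rewrite all_cat all_map pa pb.
Qed.

Lemma ctrl_sink_delta {R : nzRingType} {m : nat} {i0 : 'I_m} :
  (i0 : nat) = 0%N -> ctrl_sink R m = delta_mx i0 0.
Proof. by move=> i0_0; apply/colP => i; rewrite !mxE eqxx andbT -i0_0. Qed.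

Lemma dirichlet_lap_unit (R : realFieldType) (g : ttsp R) :
  ttsp_pos g -> dirichlet_lap g \in unitmx.
Proof.
move=> g_pos; rewrite unitmxE unitfE; apply/negP => /det0P[x x_neq0 xL0].
have nv_gt0 : (0 < nv g)%N by rewrite ltnW ?nv_ge2.
pose f k := if k is k'.+1 then ext0 (x 0) k' else 0.
have quad0 : \sum_(a < nv g) f a * \sum_(k < nv g) lap_entry (edges g) a k * f k = 0.
  pose Lf (a : nat) := \sum_(k < nv g) lap_entry (edges g) a k * f k.
  rewrite (sumr_ord_recl_pred (fun a => f a * Lf a)) // mul0r add0r.
  apply: big1 => i _.
  rewrite /Lf (sumr_ord_recl_pred (fun k => lap_entry (edges g) i.+1 k * f k)) //.
  rewrite mulr0 add0r /= ext0E.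
  suff -> : \sum_(j < (nv g).-1) lap_entry (edges g) i.+1 j.+1 * f j.+1 =
            (x *m dirichlet_lap g) 0 i by rewrite xL0 mxE mulr0.
  by rewrite mxE; apply: eq_bigr => j _; rewrite /= ext0E mxE lap_entryC mulrC.
have f_const :=
  edges_connected (lap_quad_eq0 (edge_ends_lt_nv g) (edges_pos g_pos) quad0).
move/negP: x_neq0; apply; apply/eqP/rowP => i; rewrite !mxE -ext0E.
by rewrite -[ext0 _ _]/(f i.+1) f_const // -ltn_predRL.
Qed.

Lemma H2sq_invmx {R : fieldType} {g : ttsp R} {i0 : 'I_(nv g).-1} :
  (i0 : nat) = 0%N -> H2sq g = invmx (dirichlet_lap g) i0 i0 / 2.
Proof.
move=> i0_0; rewrite /H2sq (ctrl_sink_delta i0_0) trmx_delta -rowE -colE.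
by rewrite trace_mx11 !mxE invmxN mxE mulNr mulrN opprK mul1r mulrC.
Qed.

Lemma src_sink_tr_mul (R : nzRingType) n (v : 'cV[R]_n) : (1 < n)%N ->
  ((src_sink R n)^T *m v) 0 0 = ext0 (v^~ 0) 1%N - ext0 (v^~ 0) 0%N.
Proof.
move=> n_gt1; rewrite mxE -(sum_ord_deltaB _ n_gt1 (ltnW n_gt1)).
by apply: eq_bigr => k _; rewrite !mxE ext0E [1%N == _]eq_sym [0%N == _]eq_sym.
Qed.

Lemma dirichlet_lap_potential {R : comNzRingType} {g : ttsp R} {v : 'cV_(nv g)} :
  laplacian g *m v = src_sink R (nv g) ->
  dirichlet_lap g *m \col_(i < (nv g).-1) (ext0 (v^~ 0) i.+1 - ext0 (v^~ 0) 0%N) =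
  ctrl_sink R (nv g).-1.
Proof.
move=> Lv; apply/colP => i; rewrite !mxE.
have nv_gt0 : (0 < nv g)%N by rewrite ltnW ?nv_ge2.
have i1_lt : (i.+1 < nv g)%N by rewrite -ltn_predRL.
set F := ext0 _.
move/colP/(_ (Ordinal i1_lt)): Lv; rewrite !mxE /= subr0 => <-.
transitivity (\sum_(k < nv g) lap_entry (edges g) i.+1 k * (F k - F 0%N)).
  rewrite (sumr_ord_recl_pred (fun k => lap_entry (edges g) i.+1 k * (F k - F 0%N))) //.
  by rewrite subrr mulr0 add0r; apply: eq_bigr => j _; rewrite !mxE.
rewrite (sum_lap_entry_mulB (edge_ends_lt_nv g)).
by apply: eq_bigr => k _; rewrite !mxE /F ext0E.
Qed.

Lemma H2sq_eff_res {R : realFieldType} {g : ttsp R} {r : R} :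
  ttsp_pos g -> is_eff_res g r -> H2sq g = r / 2.
Proof.
move=> g_pos [v [Lv ->]].
have i0_lt : (0 < (nv g).-1)%N by rewrite ltn_predRL nv_ge2.
pose i0 := Ordinal i0_lt.
have inv_i0 : invmx (dirichlet_lap g) i0 i0 = ext0 (v^~ 0) 1%N - ext0 (v^~ 0) 0%N.
  have := congr1 (mulmx (invmx (dirichlet_lap g))) (dirichlet_lap_potential Lv).
  rewrite mulKmx ?dirichlet_lap_unit // (ctrl_sink_delta (erefl : (i0 : nat) = 0%N)).
  by rewrite -colE => /colP/(_ i0); rewrite !mxE.
by rewrite (H2sq_invmx (erefl : (i0 : nat) = 0%N)) inv_i0 src_sink_tr_mul ?nv_ge2.
Qed.

Theorem lemma5 (R : realFieldType) (g1 : ttsp R) (c2 r1 r2 : R) :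
  ttsp_pos g1 -> 0 < c2 ->
  is_eff_res g1 r1 -> is_eff_res (TEdge c2) r2 ->
  r1 = r2 ->
  H2sq g1 = H2sq (TEdge c2).
Proof.
move=> g1_pos c2_pos res1 res2 r12.
have edge_pos : ttsp_pos (TEdge c2) by [].
by rewrite (H2sq_eff_res g1_pos res1) (H2sq_eff_res edge_pos res2) r12.
Qed.
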